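(* Let $R$ be an $F$-finite ring of prime characteristic $p>0$ and let $R\to S$ be a finite extension. Then the trace ideal $\tau_{S/R}=\operatorname{Im}\big(\operatorname{Hom}_R(S,R)\xrightarrow{\ \psi\mapsto\psi(1)\ }R\big)$ is a compatible ideal of $R$; that is, for every $e\in\mathbb{N}$ and every $\phi\in\operatorname{Hom}_R(F^e_*R,R)$ we have $\phi(F^e_*\tau_{S/R})\subseteq\tau_{S/R}$.
   Context: $F^e_*R$ denotes $R$ viewed as an $R$-module via the $e$-th iterate of Frobenius. $R$ is $F$-finite if $F^e_*R$ is a finitely generated $R$-module. An ideal $I\subseteq R$ is compatible if for all $e\in\mathbb{N}$ and all $\varphi\in\operatorname{Hom}_R(F^e_*R,R)$ one has $\varphi(F^e_*I)\subseteq I$. For an $R$-algebra $S$, the trace ideal $\tau_{S/R}$ is the image of the evaluation-at-$1$ map $\operatorname{Hom}_R(S,R)\to R$. *)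

From HB Require Import structures.
From mathcomp Require Import all_boot all_order all_algebra.
Set Implicit Arguments. Unset Strict Implicit. Unset Printing Implicit Defensive.
Import GRing.Theory.
Local Open Scope ring_scope.

(* A map phi : F^e_* R -> R that is R-linear, where r acts on F^e_* R
   by x |-> r^(p^e) * x.  These are exactly the elements of
   Hom_R(F^e_* R, R). *)
Definition frob_linear (R : comNzRingType) (p e : nat) (phi : R -> R) : Prop :=
  (forall x y : R, phi (x + y) = phi x + phi y) /\
  (forall r x : R, phi (r ^+ (p ^ e) * x) = r * phi x).

(* F^e_* R is a finitely generated R-module: there are finitely many
   g_1..g_n in R such that every x is sum_i r_i^(p^e) * g_i. *)
Definition frob_fg (R : comNzRingType) (p e : nat) : Prop :=
  exists g : seq R, forall x : R,
    exists r : seq R, size r = size g /\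
      x = \sum_(i < size g) (nth 0 r i) ^+ (p ^ e) * (nth 0 g i).

Definition F_finite (R : comNzRingType) (p : nat) : Prop :=
  forall e : nat, @frob_fg R p e.

Definition module_finite (R S : comNzRingType) (f : {rmorphism R -> S}) : Prop :=
  exists s : seq S, forall y : S,
    exists r : seq R, size r = size s /\
      y = \sum_(i < size s) f (nth 0 r i) * (nth 0 s i).

Definition R_linear_to (R S : comNzRingType) (f : {rmorphism R -> S}) (psi : S -> R)
  : Prop :=
  (forall x y : S, psi (x + y) = psi x + psi y) /\
  (forall (r : R) (y : S), psi (f r * y) = r * psi y).

Definition trace_ideal (R S : comNzRingType) (f : {rmorphism R -> S}) : R -> Prop :=
  fun x => exists psi : S -> R, R_linear_to f psi /\ psi 1 = x.

Definition compatible (R : comNzRingType) (p : nat) (I : R -> Prop) : Prop :=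
  forall (e : nat) (phi : R -> R), @frob_linear R p e phi ->
    forall x : R, I x -> I (phi x).

From HB Require Import structures.
From mathcomp Require Import all_boot all_order all_algebra.
Set Implicit Arguments. Unset Strict Implicit. Unset Printing Implicit Defensive.
Import GRing.Theory.
Local Open Scope ring_scope.

(* Write q = p^e.  Given psi in Hom_R(S, R) with psi 1 = x and phi in
   Hom_R(F^e_* R, R), the map  s |-> phi (psi (s^q))  is again in Hom_R(S, R):
   it is additive because s |-> s^q is additive in characteristic p (this
   characteristic passes from R to S along f), and it is R-linear because
   (f r * s)^q = f (r^q) * s^q, so the R-linearity of psi turns r into r^q,
   which phi then turns back into r.  Its value at 1 is phi (psi 1) = phi x,
   hence phi x lies in the trace ideal. *)

Lemma exprD_pchar_pow (S : comNzRingType) (p e : nat) :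
  p \in [pchar S] ->
  forall s t : S, (s + t) ^+ (p ^ e) = s ^+ (p ^ e) + t ^+ (p ^ e).
Proof.
move=> pS s t; apply: exprDn_pchar.
by rewrite pnatX (pnatE _ (pcharf_prime pS)) pS.
Qed.

Section FrobeniusTwist.

Variables (R S : comNzRingType) (p e : nat) (f : {rmorphism R -> S}).
Hypothesis pR : p \in [pchar R].

Definition frob_twist (phi : R -> R) (psi : S -> R) : S -> R :=
  fun s => phi (psi (s ^+ (p ^ e))).

Lemma frob_twist_linear (phi : R -> R) (psi : S -> R) :
  frob_linear p e phi -> R_linear_to f psi ->
  R_linear_to f (frob_twist phi psi).
Proof.
move=> [phiD phiZ] [psiD psiZ]; rewrite /frob_twist; split.
- move=> s t.
  by rewrite (exprD_pchar_pow e (rmorph_pchar f pR)) psiD phiD.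
- by move=> r s; rewrite exprMn -rmorphXn psiZ phiZ.
Qed.

Lemma frob_twist1 (phi : R -> R) (psi : S -> R) :
  frob_twist phi psi 1 = phi (psi 1).
Proof. by rewrite /frob_twist expr1n. Qed.

End FrobeniusTwist.

Theorem mainTheorem2 (R S : comNzRingType) (p : nat) (f : {rmorphism R -> S}) :
  (p \in [pchar R])%R ->
  @F_finite R p ->
  injective f ->
  module_finite f ->
  @compatible R p (trace_ideal f).
Proof.
move=> pR _ _ _ e phi phi_lin x [psi [psi_lin <-]].
exists (frob_twist p e phi psi); split.
- exact: frob_twist_linear.
- exact: frob_twist1.
Qed.
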